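(* Let $G$ be a bipartite permutation graph with a transitive vertex ordering $<$. Let $M=\{e_1,e_2,\ldots,e_t\}$ be a matching in $G$ where $l(e_1)<l(e_2)<\cdots<l(e_t)$. Then $M$ is uniquely restricted if and only if $\{e_i,e_{i+1}\}$ is a uniquely restricted matching in $G$ for each $i\in\{1,2,\ldots,t-1\}$.
   Context: Graphs are finite, simple, undirected. A permutation graph is a graph isomorphic to some $G_\pi$, where for a permutation $\pi$ of $\{1,\dots,n\}$, $G_\pi$ has vertex set $\{1,\dots,n\}$ and edges $ij$ with $(i-j)(\pi(i)-\pi(j))<0$; a bipartite permutation graph is a permutation graph that is bipartite. An ordering $<$ of $V(G)$ is a transitive vertex ordering if for all $u<v<w$: (a) $uv,vw\in E(G)$ implies $uw\in E(G)$, and (b) $uw\in E(G)$ implies $uv\in E(G)$ or $vw\in E(G)$. For an edge $e=uv$, $l(e)=\min_<\{u,v\}$ and $r(e)=\max_<\{u,v\}$. A matching is a set of pairwise vertex-disjoint edges; it is uniquely restricted if no other matching of $G$ matches exactly the same vertex set. *)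

From mathcomp Require Import all_boot all_order all_algebra all_fingroup.
Set Implicit Arguments. Unset Strict Implicit. Unset Printing Implicit Defensive.
Import GRing.Theory Num.Theory.

Definition simple_graph (T : finType) (adj : rel T) : Prop :=
  symmetric adj /\ irreflexive adj.

Definition perm_graph_adj (n : nat) (pi : 'S_n) (i j : 'I_n) : bool :=
  (((i : nat)%:Z - (j : nat)%:Z) * (((pi i : nat)%:Z) - ((pi j : nat)%:Z)) < 0)%R.

Definition permutation_graph (T : finType) (adj : rel T) : Prop :=
  exists (n : nat) (pi : 'S_n) (f : T -> 'I_n),
    bijective f /\ forall x y, adj x y = perm_graph_adj pi (f x) (f y).

Definition bipartite (T : finType) (adj : rel T) : Prop :=
  exists c : T -> bool, forall x y, adj x y -> c x != c y.

Definition bipartite_permutation_graph (T : finType) (adj : rel T) : Prop :=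
  permutation_graph adj /\ bipartite adj.

(* A linear ordering of V(G) is given by an injective rank : T -> nat;
   u < v iff rank u < rank v. *)
Definition transitive_vertex_ordering (T : finType) (adj : rel T) (rank : T -> nat) : Prop :=
  injective rank /\
  forall u v w, rank u < rank v -> rank v < rank w ->
    (adj u v -> adj v w -> adj u w) /\ (adj u w -> adj u v || adj v w).

Definition is_edge (T : finType) (adj : rel T) (e : {set T}) : Prop :=
  exists u v, adj u v /\ e = [set u; v].

Definition is_matching (T : finType) (adj : rel T) (M : {set {set T}}) : Prop :=
  (forall e, e \in M -> is_edge adj e) /\ trivIset M.

Definition uniquely_restricted (T : finType) (adj : rel T) (M : {set {set T}}) : Prop :=
  is_matching adj M /\
  forall M', is_matching adj M' -> cover M' = cover M -> M' = M.

(* The edge set listed by a sequence of ordered pairs (l(e), r(e)). *)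
Definition edges_of (T : finType) (s : seq (T * T)) : {set {set T}} :=
  [set [set p.1; p.2] | p in s].

From mathcomp Require Import all_boot all_order all_algebra all_fingroup.
From mathcomp Require Import zify.
Set Implicit Arguments. Unset Strict Implicit. Unset Printing Implicit Defensive.

(* A bipartite graph is triangle-free, so under a transitive vertex ordering
   no vertex has neighbours on both sides of it, and a vertex lying strictly
   inside an edge ab is adjacent to the endpoint of ab on the side of its own
   neighbours.  Call e_a, e_b (a < b) crossing when l(e_a)r(e_b) and
   l(e_b)r(e_a) are edges; swapping a crossing pair gives a second matching on
   the same vertices.  If a matching M' covers V(M), consider the first e_i
   of M missing from M': the M'-partners of l(e_i) and r(e_i) are endpoints
   of later edges of M, and the interval argument turns them into a crossing
   pair e_a, e_b, and then, shrinking b - a through e_(a+1), into a crossing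
   consecutive pair.  Conversely, sub-matchings of a uniquely restricted
   matching are uniquely restricted. *)

Lemma edges_of_pair (T : finType) (p q : T * T) :
  edges_of [:: p; q] = [set [set p.1; p.2]; [set q.1; q.2]].
Proof.
apply/setP => f; apply/imsetP/set2P => [[x] | [->|->]].
  by rewrite !inE => /orP [] /eqP -> ->; [left | right].
- by exists p; rewrite ?inE ?eqxx.
- by exists q; rewrite ?inE ?eqxx ?orbT.
Qed.

Lemma edges_of_subset (T : finType) (s1 s2 : seq (T * T)) :
  {subset s1 <= s2} -> edges_of s1 \subset edges_of s2.
Proof.
by move=> sub12; apply/subsetP => f /imsetP [p /sub12 p_s2 ->]; apply: imset_f.
Qed.

Lemma cover_set2 (T : finType) (A B : {set T}) : cover [set A; B] = A :|: B.
Proof. by rewrite /cover bigcup_setU !big_set1. Qed.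

Lemma bipartite_triangle_free (T : finType) (adj : rel T) :
  bipartite adj -> forall x y z, adj x y -> adj y z -> adj x z -> False.
Proof.
by case=> c c_adj x y z /c_adj + /c_adj + /c_adj; case: (c x); case: (c y); case: (c z).
Qed.

Section Matchings.

Variables (T : finType) (adj : rel T).

Lemma matching_partner (M : {set {set T}}) x :
  symmetric adj -> (forall f, f \in M -> is_edge adj f) -> x \in cover M ->
  exists2 y, adj x y & [set x; y] \in M.
Proof.
move=> adj_sym M_edges /bigcupP [f fM xf]; have [u [w [uw ef]]] := M_edges f fM.
move: xf fM; rewrite ef => /set2P [->|->] fM; first by exists w.
by exists u; [rewrite adj_sym | rewrite setUC].
Qed.

Lemma matching_eq_of_subset (M N : {set {set T}}) :
  is_matching adj M -> N \subset M -> cover M \subset cover N -> N = M.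
Proof.
move=> [M_edges M_triv] NM covMN; apply/eqP; rewrite eqEsubset NM /=.
apply/subsetP => f fM; have [u [w [_ ef]]] := M_edges f fM.
have uf : u \in f by rewrite ef set21.
have /bigcupP [g gN ug] : u \in cover N.
  by apply: (subsetP covMN); apply/bigcupP; exists f.
have [-> // | fg] := eqVneq f g.
by rewrite (disjointFr (trivIsetP M_triv f g fM (subsetP NM g gN) fg) uf) in ug.
Qed.

Lemma ur_subset (M P : {set {set T}}) :
  uniquely_restricted adj M -> P \subset M -> uniquely_restricted adj P.
Proof.
move=> [[M_edges M_triv] M_ur] PM.
have P_matching : is_matching adj P.
  by split; [move=> f /(subsetP PM) /M_edges | exact: trivIsetS M_triv].
split=> // N [N_edges N_triv] covNP.
have disj_rest : [disjoint cover (M :\: P) & cover P].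
  apply: bigcup_disjoint => B BP; rewrite disjoint_sym.
  apply: bigcup_disjoint => A /setDP [AM AP]; rewrite disjoint_sym.
  by apply: (trivIsetP M_triv) => //; [exact: (subsetP PM) | apply: contraNneq AP => ->].
have exchange_matching : is_matching adj ((M :\: P) :|: N).
  split; first by move=> f /setUP [/setDP [/M_edges] | /N_edges].
  by apply: trivIsetU; [exact: trivIsetD | | rewrite covNP].
have cover_exchange : cover ((M :\: P) :|: N) = cover M.
  have split_M : (M :\: P) :|: P = M by rewrite setUC -{1}(setIidPr PM) setID.
  by rewrite /cover bigcup_setU -/(cover N) covNP /cover -bigcup_setU split_M.
have NM : N \subset M by rewrite -(M_ur _ exchange_matching cover_exchange) subsetUr.
have NP : N \subset P.
  apply/subsetP => B BN; apply/contraT => BP; have [u [w [_ eB]]] := N_edges B BN.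
  have uB : u \in B by rewrite eB set21.
  have u_rest : u \in cover (M :\: P).
    by apply/bigcupP; exists B; rewrite // inE BP (subsetP NM).
  have u_P : u \in cover P by rewrite -covNP; apply/bigcupP; exists B.
  by rewrite (disjointFr disj_rest u_rest) in u_P.
by apply: matching_eq_of_subset; rewrite // covNP.
Qed.

Lemma swap_not_ur a1 b1 a2 b2 :
  uniq [:: a1; b1; a2; b2] -> adj a1 b2 -> adj a2 b1 ->
  ~ uniquely_restricted adj [set [set a1; b1]; [set a2; b2]].
Proof.
rewrite /= !inE !negb_or => /and4P [/and3P [a1b1 a1a2 a1b2] /andP [_ b1b2] a2b2 _].
move=> adj12 adj21 [_ ur].
have swap_matching : is_matching adj [set [set a1; b2]; [set a2; b1]].
  split; first by move=> f /set2P [->|->]; [exists a1, b2 | exists a2, b1].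
  apply/trivIsetP => A B /set2P [->|->] /set2P [->|->]; rewrite ?eqxx // => _;
    rewrite disjoints_subset; apply/subsetP => x; rewrite !inE => /orP [] /eqP ->;
    by rewrite negb_or ?[b2 == _]eq_sym ?[_ == a1]eq_sym ?a1b1 ?a1a2 ?a2b2 ?b1b2.
have swap_cover :
    cover [set [set a1; b2]; [set a2; b1]] = cover [set [set a1; b1]; [set a2; b2]].
  rewrite !cover_set2; apply/setP => x; rewrite !inE.
  by case: (x == a1); case: (x == b1); case: (x == a2); case: (x == b2).
have := set21 [set a1; b2] [set a2; b1]; rewrite (ur _ swap_matching swap_cover).
case/set2P => /setP eq_edge; [move: (eq_edge b2) | move: (eq_edge a1)];
  by rewrite !inE !eqxx ?orbT ?[b2 == _]eq_sym ?(negbTE a1a2) ?(negbTE a1b2) ?(negbTE b1b2).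
Qed.

End Matchings.

Section TransitiveOrdering.

Variables (T : finType) (adj : rel T) (rank : T -> nat).
Hypotheses (adj_sym : symmetric adj) (adj_irr : irreflexive adj).
Hypothesis triangle_free : forall x y z, adj x y -> adj y z -> adj x z -> False.
Hypothesis tvo : transitive_vertex_ordering adj rank.

Lemma no_monotone_path u v w :
  rank u < rank v -> rank v < rank w -> adj u v -> adj v w -> False.
Proof.
move=> uv vw adj_uv adj_vw; have [closed _] := tvo.2 u v w uv vw.
exact: triangle_free adj_uv adj_vw (closed adj_uv adj_vw).
Qed.

Lemma neighbors_right v w u :
  adj v w -> rank v < rank w -> adj v u -> rank v < rank u.
Proof.
move=> adj_vw vw adj_vu; case: ltngtP => // [uv | /tvo.1 uv].
  by case: (no_monotone_path uv vw); rewrite // adj_sym.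
by rewrite uv adj_irr in adj_vu.
Qed.

Lemma neighbors_left w v u :
  adj w v -> rank w < rank v -> adj u v -> rank u < rank v.
Proof.
move=> adj_wv wv adj_uv; case: ltngtP => // [vu | /tvo.1 uv].
  by case: (no_monotone_path wv vu); rewrite // adj_sym.
by rewrite uv adj_irr in adj_uv.
Qed.

Lemma adj_right_end a v b w :
  rank a < rank v -> rank v < rank b -> adj a b ->
  adj v w -> rank v < rank w -> adj v b.
Proof.
move=> av vb adj_ab adj_vw vw; have [_ split_ab] := tvo.2 a v b av vb.
case/orP: (split_ab adj_ab) => // adj_av.
by case: (no_monotone_path av vw adj_av adj_vw).
Qed.

Lemma adj_left_end a v b w :
  rank a < rank v -> rank v < rank b -> adj a b ->
  adj w v -> rank w < rank v -> adj a v.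
Proof.
move=> av vb adj_ab adj_wv wv; have [_ split_ab] := tvo.2 a v b av vb.
case/orP: (split_ab adj_ab) => // adj_vb.
by case: (no_monotone_path wv vb adj_wv adj_vb).
Qed.

Section OrderedMatching.

Variables (d : T * T) (s : seq (T * T)).
Hypothesis s_edges : forall p, p \in s -> adj p.1 p.2 /\ rank p.1 < rank p.2.
Hypothesis s_sorted : sorted (fun p q : T * T => rank p.1 < rank q.1) s.
Hypothesis s_matching : is_matching adj (edges_of s).

Let l k := (nth d s k).1.
Let r k := (nth d s k).2.
Let e k := [set l k; r k].

Lemma adj_lr k : k < size s -> adj (l k) (r k).
Proof. by move=> ks; have [] := s_edges (mem_nth d ks). Qed.

Lemma lt_lr k : k < size s -> rank (l k) < rank (r k).
Proof. by move=> ks; have [] := s_edges (mem_nth d ks). Qed.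

Lemma lt_l p q : p < q -> q < size s -> rank (l p) < rank (l q).
Proof.
move=> pq qs; apply: (sorted_ltn_nth _ d s_sorted); rewrite ?inE //=.
- by move=> ? ? ?; apply: ltn_trans.
- exact: ltn_trans pq qs.
Qed.

Lemma l_inj p q : p < size s -> q < size s -> l p = l q -> p = q.
Proof.
move=> ps qs lpq; case: (ltngtP p q) => // [pq | qp].
  by have := lt_l pq qs; rewrite lpq ltnn.
by have := lt_l qp ps; rewrite lpq ltnn.
Qed.

Lemma mem_edges_of k : k < size s -> e k \in edges_of s.
Proof. by move=> ks; apply: imset_f; exact: mem_nth. Qed.

Lemma edges_ofP f : f \in edges_of s -> exists2 k, k < size s & f = e k.
Proof.
case/imsetP => p ps ->; exists (index p s); first by rewrite index_mem.
by rewrite /e /l /r nth_index.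
Qed.

Lemma endpoint_inj p q x :
  p < size s -> q < size s -> x \in e p -> x \in e q -> p = q.
Proof.
move=> ps qs xp xq; have [//|pq] := eqVneq p q.
have epq : e p != e q.
  apply: contraNneq pq => /setP epq; apply/eqP.
  move: (epq (l p)) (epq (l q)); rewrite !inE !eqxx /=.
  case/esym/orP => /eqP lp; first by move=> _; exact: l_inj.
  case/orP => /eqP lq; first exact/esym/(l_inj qs ps).
  by have := lt_lr ps; have := lt_lr qs; rewrite -lp -lq; lia.
have := trivIsetP s_matching.2 _ _ (mem_edges_of ps) (mem_edges_of qs) epq.
by move/disjointFr/(_ xp); rewrite xq.
Qed.

Let crossing a b := adj (l a) (r b) && adj (l b) (r a).

Lemma crossing_not_ur a :
  a.+1 < size s -> crossing a a.+1 ->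
  ~ uniquely_restricted adj (edges_of [:: nth d s a; nth d s a.+1]).
Proof.
move=> a1s /andP [adj_lr' adj_l'r]; have a_s := ltnW a1s.
rewrite edges_of_pair; apply: swap_not_ur adj_lr' adj_l'r.
have distinct x y : x \in e a -> y \in e a.+1 -> x != y.
  move=> xa ya; apply/eqP => xy; rewrite xy in xa.
  by have := endpoint_inj a_s a1s xa ya; lia.
have lr_neq k : k < size s -> l k != r k.
  by move=> ks; apply: contraTneq (lt_lr ks) => ->; rewrite ltnn.
by rewrite /= !inE !negb_or !lr_neq //= !distinct ?set21 ?set22.
Qed.

Lemma consecutive_crossing a b :
  a < b -> b < size s -> crossing a b -> exists2 c, c.+1 < size s & crossing c c.+1.
Proof.
have [n] := ubnP (b - a); elim: n a b => // n IH a b ba_n ab bs /andP [adj_ab adj_ba].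
case: (ltngtP a.+1 b) => [ab1 | ba | a1b]; [| lia | by subst b; exists a => //; apply/andP].
have a_s : a < size s := ltn_trans ab bs; have a1s : a.+1 < size s := ltn_trans ab1 bs.
have la_la1 := lt_l (ltnSn a) a1s; have la1_lb := lt_l ab1 bs.
have la1_ra1 := lt_lr a1s; have lb_rb := lt_lr bs.
have lb_ra := neighbors_right (adj_lr bs) (lt_lr bs) adj_ba.
have adj_a1_ra : adj (l a.+1) (r a).
  by apply: adj_right_end (adj_lr a_s) (adj_lr a1s) (lt_lr a1s); lia.
have adj_a1_rb : adj (l a.+1) (r b).
  by apply: adj_right_end adj_ab (adj_lr a1s) (lt_lr a1s); lia.
case: (ltnP (rank (r a.+1)) (rank (r b))) => ra1_rb.
  have adj_a_ra1 : adj (l a) (r a.+1).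
    by apply: adj_left_end ra1_rb adj_ab (adj_lr a1s) (lt_lr a1s); lia.
  by apply: (IH a a.+1); rewrite // ?ltnSn //; [lia | apply/andP].
have adj_b_ra1 : adj (l b) (r a.+1).
  by apply: adj_right_end (adj_lr a1s) (adj_lr bs) (lt_lr bs); lia.
by apply: (IH a.+1 b); rewrite //; [lia | apply/andP].
Qed.

Lemma consecutive_crossing_of_partners i j m :
  i < j -> j < size s -> i < m -> m < size s ->
  adj (l i) (r j) -> adj (l m) (r i) -> exists2 c, c.+1 < size s & crossing c c.+1.
Proof.
move=> ij js im ms adj_i_rj adj_m_ri.
suff [a [b [ab bs cab]]] : exists a b, [/\ a < b, b < size s & crossing a b].
  exact: consecutive_crossing cab.
have i_s := ltn_trans ij js.
have li_lj := lt_l ij js; have li_lm := lt_l im ms.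
have lj_rj := lt_lr js; have lm_rm := lt_lr ms.
have lm_ri := neighbors_right (adj_lr ms) (lt_lr ms) adj_m_ri.
case: (ltngtP m j) => [mj | jm | m_j].
- have lm_lj := lt_l mj js.
  case: (ltnP (rank (r m)) (rank (r j))) => rm_rj.
    have adj_i_rm : adj (l i) (r m).
      by apply: adj_left_end rm_rj adj_i_rj (adj_lr ms) (lt_lr ms); lia.
    by exists i, m; rewrite /crossing adj_i_rm adj_m_ri.
  have adj_m_rj : adj (l m) (r j).
    by apply: adj_right_end adj_i_rj (adj_lr ms) (lt_lr ms); lia.
  have adj_j_rm : adj (l j) (r m).
    by apply: adj_right_end (adj_lr ms) (adj_lr js) (lt_lr js); lia.
  by exists m, j; rewrite /crossing adj_m_rj adj_j_rm.
- have lj_lm := lt_l jm ms.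
  have adj_j_ri : adj (l j) (r i).
    by apply: adj_right_end (adj_lr i_s) (adj_lr js) (lt_lr js); lia.
  by exists i, j; rewrite /crossing adj_i_rj adj_j_ri.
- by exists i, j; rewrite /crossing adj_i_rj -m_j adj_m_ri.
Qed.

Section Exchange.

Variable M' : {set {set T}}.
Hypothesis M'_matching : is_matching adj M'.
Hypothesis M'_cover : cover M' = cover (edges_of s).

Lemma partner_in_later_edge i x y :
  i < size s -> (forall k, k < i -> e k \in M') -> e i \notin M' ->
  x \in e i -> adj x y -> [set x; y] \in M' ->
  exists k, [/\ i < k, k < size s & y \in e k].
Proof.
move=> i_s before_in ei_out xi adj_xy xyM'.
have /bigcupP [f /edges_ofP [k ks ->] yk] : y \in cover (edges_of s).
  by rewrite -M'_cover; apply/bigcupP; exists [set x; y]; rewrite ?set22.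
exists k; split=> //; case: (ltngtP i k) => // [ki | ik]; exfalso.
  have xy_ek : [set x; y] = e k.
    apply/eqP/contraT => ne; have := trivIsetP M'_matching.2 _ _ xyM' (before_in k ki) ne.
    by move/disjointFr/(_ (set22 x y)); rewrite yk.
  have xk : x \in e k by rewrite -xy_ek set21.
  by have := endpoint_inj ks i_s xk xi; lia.
subst k; have : x != y by apply: contraTneq adj_xy => ->; rewrite adj_irr.
by move: xyM'; case/set2P: xi => ->; case/set2P: yk => ->;
  rewrite ?eqxx // ?[[set r i; _]]setUC => /(negP ei_out).
Qed.

Lemma left_end_partner i :
  i < size s -> (forall k, k < i -> e k \in M') -> e i \notin M' ->
  exists j, [/\ i < j, j < size s & adj (l i) (r j)].
Proof.
move=> i_s before_in ei_out.
have li_cover : l i \in cover M'.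
  by rewrite M'_cover; apply/bigcupP; exists (e i); rewrite ?mem_edges_of ?set21.
have [y adj_y yM'] := matching_partner adj_sym M'_matching.1 li_cover.
have [k [ik ks yk]] := partner_in_later_edge i_s before_in ei_out (set21 _ _) adj_y yM'.
exists k; split=> //; case/set2P: yk => y_k; last by rewrite -y_k.
exfalso; rewrite y_k adj_sym in adj_y.
by have := neighbors_right (adj_lr ks) (lt_lr ks) adj_y; have := lt_l ik ks; lia.
Qed.

Lemma right_end_partner i :
  i < size s -> (forall k, k < i -> e k \in M') -> e i \notin M' ->
  exists m, [/\ i < m, m < size s & adj (l m) (r i)].
Proof.
move=> i_s before_in ei_out.
have ri_cover : r i \in cover M'.
  by rewrite M'_cover; apply/bigcupP; exists (e i); rewrite ?mem_edges_of ?set22.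
have [y adj_y yM'] := matching_partner adj_sym M'_matching.1 ri_cover.
have [k [ik ks yk]] := partner_in_later_edge i_s before_in ei_out (set22 _ _) adj_y yM'.
exists k; split=> //; case/set2P: yk => y_k; first by rewrite -y_k adj_sym.
exfalso; rewrite y_k in adj_y; have adj_rk_ri : adj (r k) (r i) by rewrite adj_sym.
have := neighbors_left (adj_lr ks) (lt_lr ks) adj_y.
by have := neighbors_left (adj_lr i_s) (lt_lr i_s) adj_rk_ri; lia.
Qed.

Hypothesis consecutive_ur : forall c, c.+1 < size s ->
  uniquely_restricted adj (edges_of [:: nth d s c; nth d s c.+1]).

Lemma edge_in_covering_matching i : i < size s -> e i \in M'.
Proof.
elim/ltn_ind: i => i IH i_s; apply/contraT => ei_out.
have before_in k : k < i -> e k \in M' by move=> ki; apply: IH; lia.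
have [j [ij js adj_i_rj]] := left_end_partner i_s before_in ei_out.
have [m [im ms adj_m_ri]] := right_end_partner i_s before_in ei_out.
have [c c1s cross_c] := consecutive_crossing_of_partners ij js im ms adj_i_rj adj_m_ri.
by case: (crossing_not_ur c1s cross_c (consecutive_ur c1s)).
Qed.

End Exchange.

Lemma ur_of_consecutive_ur :
  (forall c, c.+1 < size s ->
     uniquely_restricted adj (edges_of [:: nth d s c; nth d s c.+1])) ->
  uniquely_restricted adj (edges_of s).
Proof.
move=> consecutive_ur; split=> // M' M'_matching M'_cover.
have edges_in : edges_of s \subset M'.
  apply/subsetP => f /edges_ofP [k ks ->].
  exact: (edge_in_covering_matching M'_matching M'_cover consecutive_ur ks).
by symmetry; apply: matching_eq_of_subset M'_matching edges_in _; rewrite M'_cover.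
Qed.

End OrderedMatching.

End TransitiveOrdering.

Theorem theorem6 (T : finType) (adj : rel T) (rank : T -> nat)
  (s : seq (T * T)) :
  simple_graph adj ->
  bipartite_permutation_graph adj ->
  transitive_vertex_ordering adj rank ->
  (forall p, p \in s -> adj p.1 p.2 /\ rank p.1 < rank p.2) ->
  sorted (fun p q : T * T => rank p.1 < rank q.1) s ->
  is_matching adj (edges_of s) ->
  (uniquely_restricted adj (edges_of s) <->
   forall i, i.+1 < size s ->
     forall d : T * T,
     uniquely_restricted adj (edges_of [:: nth d s i; nth d s i.+1])).
Proof.
move=> [adj_sym adj_irr] [_ bip] tvo s_edges s_sorted s_matching.
split=> [s_ur i i1s d | consecutive_ur].
  apply: ur_subset s_ur _; apply: edges_of_subset => p; rewrite !inE.
  by case/orP => /eqP ->; apply: mem_nth; rewrite // ltnW.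
case: s => [|d s] in s_edges s_sorted s_matching consecutive_ur *.
  split=> // M' M'_matching M'_cover; symmetry.
  apply: matching_eq_of_subset M'_matching _ _; last by rewrite M'_cover.
  by apply/subsetP => f /imsetP [].
have triangle_free := bipartite_triangle_free bip.
apply: (ur_of_consecutive_ur (d := d) adj_sym adj_irr triangle_free tvo) => //.
by move=> c c1s; apply: consecutive_ur.
Qed.
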